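(* Let $n\ge3$ and let $a$ be an integer with $0\le a\le n-1$. The unidirectional cycle $\overrightarrow{C_n}$ is $D$-antimagic for each of the following sets $D$: (1) $D=\{a,(a+1)\bmod n\}$; (2) $D=\{a,(a+2)\bmod n\}$, provided $n\neq4$; (3) $D=\{a,(a+3)\bmod n\}$, provided $n\ge4$ and $n\neq6$; (4) $D=\{0,1,\dots,n-1\}\setminus\{a,(a+1)\bmod n\}$; (5) $D=\{0,1,\dots,n-1\}\setminus\{a,(a+2)\bmod n\}$, provided $n\neq4$; (6) $D=\{0,1,\dots,n-1\}\setminus\{a,(a+3)\bmod n\}$, provided $n\ge4$ and $n\neq6$. (In cases (4)–(6) it is assumed that $D$ is nonempty.)
   Context: An oriented graph is a simple graph each of whose edges is given one direction. For vertices $u,v$, $d(u,v)$ is the length of a shortest directed path from $u$ to $v$ ($d(u,u)=0$). For a set $D$ of nonnegative integers, $N_D(v)=\{y : d(v,y)\in D\}$; for a bijection $f:V\to\{1,\dots,|V|\}$, $\omega_D(v)=\sum_{x\in N_D(v)}f(x)$ (empty sum $0$); $f$ is $D$-antimagic if distinct vertices have distinct $D$-weights, and the graph is $D$-antimagic if such an $f$ exists. The unidirectional cycle $\overrightarrow{C_n}$ ($n\ge3$) has vertices $v_1,\dots,v_n$ and arcs $(v_i,v_{i+1})$ for $1\le i\le n-1$ and $(v_n,v_1)$; $d(v_i,v_j)=(j-i)\bmod n$. *)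

From mathcomp Require Import all_boot.
Set Implicit Arguments. Unset Strict Implicit. Unset Printing Implicit Defensive.

Definition labeling (V : finType) (f : V -> nat) : Prop :=
  [/\ injective f,
      (forall x, 0 < f x <= #|V|) &
      (forall k, 0 < k <= #|V| -> exists x, f x = k)].

Definition Dweight (V : finType) (d : V -> V -> nat) (D : pred nat)
    (f : V -> nat) (v : V) : nat :=
  \sum_(x : V | D (d v x)) f x.

Definition D_antimagic_labeling (V : finType) (d : V -> V -> nat)
    (D : pred nat) (f : V -> nat) : Prop :=
  labeling f /\ injective (Dweight d D f).

Definition D_antimagic (V : finType) (d : V -> V -> nat) (D : pred nat) : Prop :=
  exists f : V -> nat, D_antimagic_labeling d D f.

(* Unidirectional cycle C_n on vertices 'I_n (v_{i+1} ~ i), with directed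
   distance d(v_i, v_j) = (j - i) mod n. *)
Definition cycle_dist (n : nat) (i j : 'I_n) : nat := (j + n - i) %% n.

Definition Dpair (n a k : nat) : pred nat :=
  fun m => (m == a) || (m == (a + k) %% n).

Definition Dcopair (n a k : nat) : pred nat :=
  fun m => (m < n) && ~~ Dpair n a k m.

(* Label v_i by h i + 1 for an involution h of [0, n).  The {a, a + k}-weight
   of v_i is then h (i + a) + h (i + a + k) + 2 (indices mod n), so the labeling
   is antimagic as soon as i |-> h i + h (i + k) is injective on [0, n); each
   complementary weight is the total label sum minus a pair weight, so it is
   injective too.  For odd n the identity works, since 2i + k and 2i + k - n
   have different parities.  For even n the identity makes i and i + n/2
   collide when exactly one of them wraps around, and one or two
   transpositions of labels near the wrap-around separate these pairs. *)

From mathcomp Require Import all_boot zify.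

Set Implicit Arguments.
Unset Strict Implicit.
Unset Printing Implicit Defensive.

Lemma modn_wrap n i k : i < n -> k <= n ->
  (i + k) %% n = if i + k < n then i + k else i + k - n.
Proof.
move=> lt_in le_kn; case: ltnP => [/modn_small //|le_n_ik].
by rewrite -{1}(subnK le_n_ik) modnDr modn_small //; lia.
Qed.

Lemma injective_in_gtn n (s : nat -> nat) :
  (forall i j, i < j < n -> s i <> s j) -> {in gtn n &, injective s}.
Proof.
move=> neq_s i j; rewrite !inE => lt_in lt_jn eq_s.
case: (ltngtP i j) => [lt_ij|lt_ji|//]; first by case: (neq_s i j); rewrite ?lt_ij.
by case: (neq_s j i); rewrite ?lt_ji.
Qed.

Lemma cycle_dist_eq n (v x : 'I_n) b :
  b < n -> (cycle_dist v x == b) = (val x == (v + b) %% n).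
Proof.
move=> lt_bn; have lt_vn := ltn_ord v; have lt_xn := ltn_ord x.
rewrite /cycle_dist -[b in LHS](modn_small lt_bn) -(eqn_modDr v) subnK; last lia.
by rewrite modnDr (modn_small lt_xn) addnC.
Qed.

Lemma sum_ord_pair n (g : nat -> nat) p q : p < n -> q < n -> p != q ->
  \sum_(x < n | (val x == p) || (val x == q)) g x = g p + g q.
Proof.
move=> lt_pn lt_qn neq_pq.
rewrite (bigD1 (Ordinal lt_pn)) ?eqxx //= (bigD1 (Ordinal lt_qn)) /=; last first.
  by rewrite eqxx orbT -val_eqE /= eq_sym.
rewrite big1 ?addn0 // => x /andP [/andP [/orP [] /eqP xE ne_p] ne_q].
- by case/eqP: ne_p; apply: val_inj.
- by case/eqP: ne_q; apply: val_inj.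
Qed.

Section InvolutionLabeling.

Variables (n : nat) (h : nat -> nat).
Hypotheses (h_lt : forall i, i < n -> h i < n) (hK : forall i, i < n -> h (h i) = i).

Definition succ_label (x : 'I_n) : nat := (h x).+1.

Lemma succ_label_labeling : labeling succ_label.
Proof.
split.
- move=> x y [hxy]; apply: val_inj.
  by rewrite /= -(hK (ltn_ord x)) hxy hK.
- by move=> x; rewrite card_ord; apply: h_lt.
- move=> m; rewrite card_ord => /andP [m_gt0 le_mn].
  have lt_m1n : m.-1 < n by rewrite prednK.
  by exists (Ordinal (h_lt lt_m1n)); rewrite /succ_label /= hK // prednK.
Qed.

Variables (a k : nat).
Hypotheses (lt_an : a < n) (k_gt0 : 0 < k) (lt_kn : k < n).

Lemma Dweight_pair (v : 'I_n) :
  Dweight (@cycle_dist n) (Dpair n a k) succ_label v =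
  (h ((v + a) %% n)).+1 + (h ((v + a + k) %% n)).+1.
Proof.
have lt_akn : (a + k) %% n < n by rewrite ltn_pmod //; lia.
have Dpair_dist x : Dpair n a k (cycle_dist v x) =
    (val x == (v + a) %% n) || (val x == (v + a + k) %% n).
  by rewrite /Dpair !cycle_dist_eq // modnDmr addnA.
rewrite /Dweight (eq_bigl _ _ Dpair_dist) (sum_ord_pair (fun i => (h i).+1));
  rewrite ?ltn_pmod //; try lia.
by rewrite -{1}(addn0 (v + a)) eqn_modDl mod0n (modn_small lt_kn) eq_sym -lt0n.
Qed.

Lemma Dweight_copair_add_pair (v : 'I_n) :
  Dweight (@cycle_dist n) (Dcopair n a k) succ_label v +
  Dweight (@cycle_dist n) (Dpair n a k) succ_label v = \sum_(x < n) succ_label x.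
Proof.
rewrite [RHS](bigID (fun x => Dpair n a k (cycle_dist v x))) addnC /=.
congr (_ + _); apply: eq_bigl => x.
by rewrite /Dcopair ltn_pmod //; lia.
Qed.

Hypothesis pair_sum_inj : {in gtn n &, injective (fun i => h i + h ((i + k) %% n))}.

Lemma Dweight_pair_inj : injective (Dweight (@cycle_dist n) (Dpair n a k) succ_label).
Proof.
have lt0n : 0 < n by lia.
move=> v w; rewrite !Dweight_pair -[(v + a + k) %% n]modnDml -[(w + a + k) %% n]modnDml.
rewrite !addSn !addnS => -[] /pair_sum_inj; rewrite !inE !ltn_pmod // => /(_ isT isT).
by move/eqP; rewrite eqn_modDr !modn_small // => /eqP /val_inj.
Qed.

Lemma Dweight_copair_inj : injective (Dweight (@cycle_dist n) (Dcopair n a k) succ_label).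
Proof.
move=> v w eq_vw; apply: Dweight_pair_inj.
have := Dweight_copair_add_pair v; have := Dweight_copair_add_pair w; rewrite eq_vw; lia.
Qed.

End InvolutionLabeling.

Definition pair_separating_involution n k (h : nat -> nat) : Prop :=
  [/\ forall i, i < n -> h i < n,
      forall i, i < n -> h (h i) = i &
      {in gtn n &, injective (fun i => h i + h ((i + k) %% n))}].

Lemma cycle_antimagic_of_involution n a k h :
  a < n -> 0 < k < n -> pair_separating_involution n k h ->
  D_antimagic (@cycle_dist n) (Dpair n a k) /\ D_antimagic (@cycle_dist n) (Dcopair n a k).
Proof.
move=> lt_an /andP [k_gt0 lt_kn] [h_lt hK pair_sum_inj].
have lab := succ_label_labeling h_lt hK.
by split; exists (succ_label h); split; [|exact: Dweight_pair_inj| |exact: Dweight_copair_inj].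
Qed.

(* Three-way splits keep disequalities, which [lia] handles badly, out of the context. *)
Ltac case_split_cmp := match goal with
  | |- context [?x < ?y] => no_if x; no_if y; case: (ltngtP x y) => ?; cbv iota beta
  | |- context [?x == ?y] => no_if x; no_if y; case: (ltngtP x y) => ?; cbv iota beta
  end
with no_if t := lazymatch t with context [if _ then _ else _] => fail | _ => idtac end.

Ltac case_lia := repeat (case_split_cmp; try (exfalso; lia)); lia.

Definition transp (p q i : nat) : nat := if i == p then q else if i == q then p else i.

Lemma id_pair_separating n k : odd n -> 0 < k < n -> pair_separating_involution n k id.
Proof.
move=> odd_n /andP [k_gt0 lt_kn]; split=> [i //|i //|].
apply: injective_in_gtn => i j /andP [lt_ij lt_jn]; rewrite !modn_wrap //; try lia; case_lia.
Qed.

Lemma transp_last_pair_separating n :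
  ~~ odd n -> 4 <= n -> pair_separating_involution n 1 (transp (n - 2) (n - 1)).
Proof.
move=> even_n le4n; split=> [i|i|]; rewrite /transp; first case_lia; first case_lia.
apply: injective_in_gtn => i j /andP [lt_ij lt_jn]; rewrite !modn_wrap //; try lia; case_lia.
Qed.

Lemma transp_ends_pair_separating n :
  ~~ odd n -> 6 <= n -> pair_separating_involution n 2 (transp 0 (n - 1)).
Proof.
move=> even_n le6n; split=> [i|i|]; rewrite /transp; first case_lia; first case_lia.
apply: injective_in_gtn => i j /andP [lt_ij lt_jn]; rewrite !modn_wrap //; try lia; case_lia.
Qed.

Lemma double_transp_pair_separating n : ~~ odd n -> 10 <= n ->
  pair_separating_involution n 3 (transp 0 (n - 1) \o transp 1 (n - 4)).
Proof.
move=> even_n le10n; split=> [i|i|]; rewrite /= /transp; first case_lia; first case_lia.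
apply: injective_in_gtn => i j /andP [lt_ij lt_jn]; rewrite !modn_wrap //; try lia; case_lia.
Qed.

Lemma pair_separating_4_3 : pair_separating_involution 4 3 (transp 2 3).
Proof.
split=> [i|i|]; rewrite /transp; first case_lia; first case_lia.
exact/mkseq_uniqP.
Qed.

Lemma pair_separating_8_3 : pair_separating_involution 8 3 (transp 1 7 \o transp 2 5).
Proof.
split=> [i|i|]; rewrite /= /transp; first case_lia; first case_lia.
exact/mkseq_uniqP.
Qed.

Lemma cycle_antimagic_gap1 n a : 3 <= n -> a < n ->
  D_antimagic (@cycle_dist n) (Dpair n a 1) /\ D_antimagic (@cycle_dist n) (Dcopair n a 1).
Proof.
move=> le3n lt_an; have k_range : 0 < 1 < n by lia.
suff [h hsep] : exists h, pair_separating_involution n 1 h.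
  exact: cycle_antimagic_of_involution lt_an k_range hsep.
have [odd_n|even_n] := boolP (odd n); first by exists id; exact: id_pair_separating.
by eexists; apply: transp_last_pair_separating => //; lia.
Qed.

Lemma cycle_antimagic_gap2 n a : 3 <= n -> n != 4 -> a < n ->
  D_antimagic (@cycle_dist n) (Dpair n a 2) /\ D_antimagic (@cycle_dist n) (Dcopair n a 2).
Proof.
move=> le3n ne4n lt_an; have k_range : 0 < 2 < n by lia.
suff [h hsep] : exists h, pair_separating_involution n 2 h.
  exact: cycle_antimagic_of_involution lt_an k_range hsep.
have [odd_n|even_n] := boolP (odd n); first by exists id; exact: id_pair_separating.
by eexists; apply: transp_ends_pair_separating => //; lia.
Qed.

Lemma cycle_antimagic_gap3 n a : 4 <= n -> n != 6 -> a < n ->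
  D_antimagic (@cycle_dist n) (Dpair n a 3) /\ D_antimagic (@cycle_dist n) (Dcopair n a 3).
Proof.
move=> le4n ne6n lt_an; have k_range : 0 < 3 < n by lia.
suff [h hsep] : exists h, pair_separating_involution n 3 h.
  exact: cycle_antimagic_of_involution lt_an k_range hsep.
have [odd_n|even_n] := boolP (odd n); first by exists id; exact: id_pair_separating.
have [->|ne4n] := eqVneq n 4; first by eexists; exact: pair_separating_4_3.
have [->|ne8n] := eqVneq n 8; first by eexists; exact: pair_separating_8_3.
by eexists; apply: double_transp_pair_separating => //; lia.
Qed.

Theorem mainTheorem14 (n a : nat) (hn : 3 <= n) (ha : a <= n - 1) :
  D_antimagic (@cycle_dist n) (Dpair n a 1) /\
  (n != 4 -> D_antimagic (@cycle_dist n) (Dpair n a 2)) /\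
  (4 <= n -> n != 6 -> D_antimagic (@cycle_dist n) (Dpair n a 3)) /\
  D_antimagic (@cycle_dist n) (Dcopair n a 1) /\
  (n != 4 -> D_antimagic (@cycle_dist n) (Dcopair n a 2)) /\
  (4 <= n -> n != 6 -> D_antimagic (@cycle_dist n) (Dcopair n a 3)).
Proof.
have lt_an : a < n by lia.
have [pair1 copair1] := cycle_antimagic_gap1 hn lt_an.
have gap2 ne4n := cycle_antimagic_gap2 hn ne4n lt_an.
have gap3 le4n ne6n := cycle_antimagic_gap3 le4n ne6n lt_an.
split; first exact: pair1.
split; first by move=> /gap2 [].
split; first by move=> le4n /(gap3 le4n) [].
split; first exact: copair1.
split; first by move=> /gap2 [].
by move=> le4n /(gap3 le4n) [].
Qed.
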